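(* Let $M$ be an $\widehat{\mathrm{FI}}$-module such that $\Sigma^NM$ has generation degree $\le d$. Then $M$ has generation degree $\le d+N$.
   Context: $\widehat{\mathrm S}_n=\{(\sigma,d)\in\mathrm S_n\times\mathbb Z: d\text{ odd}\iff\operatorname{sgn}\sigma=-1\}$ ($n\ge2$; trivial for $n=0,1$). $\widehat{\mathrm{FI}}$: objects $n\in\mathbb N$, $\widehat{\mathrm{FI}}(n,m)=\widehat{\mathrm S}_m/i_2(\widehat{\mathrm S}_{m-n})$ ($i_1,i_2$ inclusions on first/last letters), composition $([s],[t])\mapsto[t\,i_1(s)]$, with monoidal structure $n\oplus m=n+m$ defined on morphisms via $i_1,i_2$ and a braiding from $\mathrm{Br}_n\to\widehat{\mathrm S}_n$, $\sigma_{i,i+1}\mapsto((i\ i{+}1),1)$. $\Sigma M$ is the restriction of $M$ along $-\oplus 1$, $(\Sigma M)_n=M_{n+1}$. Generation degree $\le d$: $M$ is a quotient of $\mathbf I(W)$, $\mathbf I(W)_m=\bigoplus_{n\le m}\mathbb Z[\widehat{\mathrm{FI}}(n,m)]\otimes_{\mathbb Z\widehat{\mathrm S}_n}W_n$, with $W_n=0$ for $n>d$. *)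

From HB Require Import structures.
From mathcomp Require Import all_boot all_order fingroup perm ssralg ssrnum ssrint.
Set Implicit Arguments. Unset Strict Implicit. Unset Printing Implicit Defensive.
Import GRing.Theory.
Local Open Scope ring_scope.

(** * The groups \hat S_n, represented inside {perm 'I_n} * int.
    (s, d) \in \hat S_m  iff  (m <= 1 and d = 0)  or  (m >= 2 and d odd <-> s odd).
    For m <= 1, 'S_m is trivial, so this is the trivial group, as in the paper.
    Group law (paper convention, permutations composed as functions):
      (s,d).(t,e) = (s o t, d + e), which in MathComp notation is ((t * s)%g, d + e). *)
Definition inS (m : nat) (s : {perm 'I_m}) (d : int) : bool :=
  if (m <= 1)%N then d == 0 else odd (absz d) == odd_perm s.

(** nat-level view of a permutation of 'I_n (identity outside [0,n)). *)
Definition sfun n (s : {perm 'I_n}) (j : nat) : nat :=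
  match @insub nat (fun j => j < n)%N _ j with Some i => val (s i) | None => j end.

(** Permutation of 'I_m induced by a nat function (if it restricts to an
    injection of 'I_m; otherwise the identity -- never used in that case). *)
Definition natperm (m : nat) (f : nat -> nat) : {perm 'I_m} :=
  let g := fun i : 'I_m => (insubd i (f i) : 'I_m) in
  (if injectiveb g as b return (injectiveb g = b -> {perm 'I_m})
   then fun H => perm (elimT (@injectiveP _ _ g) H)
   else fun _ => 1%g) erefl.

Definition i1 n m (s : {perm 'I_n}) : {perm 'I_m} := natperm m (sfun s).

(** i_2 : S_k -> S_m, inclusion on the last k letters (k <= m). *)
Definition i2 k m (u : {perm 'I_k}) : {perm 'I_m} :=
  natperm m (fun j => if (m - k <= j)%N then (m - k + sfun u (j - (m - k)))%N else j).

(** A morphism n -> m (n <= m) of \hat{FI} is a coset [(s,d)] in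
    \hat S_m / i_2(\hat S_{m-n}).  A functor out of \hat{FI} is given by its
    values on representatives, invariant under the coset relation.  *)
Record FIdata := {
  Mobj : nat -> zmodType;
  Mact : forall n m : nat, {perm 'I_m} -> int -> Mobj n -> Mobj m }.
Arguments Mobj : clear implicits.
Arguments Mact : clear implicits.

Definition isFIhatMod (M : FIdata) : Prop :=
  (forall n m s d x y, (n <= m)%N -> inS s d ->
      Mact M n m s d (x - y) = Mact M n m s d x - Mact M n m s d y) /\
  (* well defined on cosets  [s] = [s . i_2(u)] *)
  (forall n m s d u e x, (n <= m)%N -> inS s d -> @inS (m - n) u e ->
      Mact M n m ((i2 m u * s)%g) (d + e) x = Mact M n m s d x) /\
  (forall n x, Mact M n n 1%g 0 x = x) /\
  (* composition ([s],[t]) |-> [t i_1(s)] *)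
  (forall n m l s d t e x, (n <= m)%N -> (m <= l)%N -> inS s d -> inS t e ->
      Mact M m l t e (Mact M n m s d x) = Mact M n l ((i1 l s * t)%g) (e + d) x).

(** * The shift functor Sigma: restriction along - (+) 1.
    For f = [(s,d)] : n -> m, f (+) id_1 = [ i_1(s) . (id_n (+) b) ] where
    b in \hat S_{m-n+1} is the image of the braiding moving one strand past
    m-n strands, i.e. the product of the m-n generators ((i i+1),1):
    the cycle n |-> m, j |-> j-1 (n < j <= m), with integer part m-n. *)
Definition shiftcyc n m : {perm 'I_m.+1} :=
  natperm m.+1 (fun j => if j == n then m
                         else if (n < j <= m)%N then j.-1 else j).

Definition Sigma (M : FIdata) : FIdata := {|
  Mobj := fun n => Mobj M n.+1;
  Mact := fun n m s d =>
    Mact M n.+1 m.+1 ((shiftcyc n m * i1 m.+1 s)%g) (d + (m - n)%N%:Z) |}.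

(** * Generation degree: M_m is generated, as an abelian group, by the images
    M(f)(y) with f : n -> m, n <= d, y in M_n (i.e. M is a quotient of
    I(W) with W concentrated in degrees <= d). *)
Inductive span (M : FIdata) (d m : nat) : Mobj M m -> Prop :=
| span_gen n s e (y : Mobj M n) :
    (n <= d)%N -> (n <= m)%N -> inS s e -> @span M d m (Mact M n m s e y)
| span_zero : @span M d m 0
| span_sub x y : @span M d m x -> @span M d m y -> @span M d m (x - y).

Definition genDegLe (M : FIdata) (d : nat) : Prop :=
  forall m (x : Mobj M m), @span M d m x.

From mathcomp Require Import all_boot all_order fingroup perm ssralg ssrnum ssrint zify.
Set Implicit Arguments. Unset Strict Implicit. Unset Printing Implicit Defensive.
Import GRing.Theory.

(* A morphism [(s,d)] : n -> m of Sigma M is, by definition, the morphism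
   [(s,d)] (+) id_1 : n+1 -> m+1 of M, so a generator of Sigma M of degree
   <= d is a generator of M of degree <= d+1, and M_0 is generated by itself.
   The one thing to check is that the representative of [(s,d)] (+) id_1 is
   again in \hat S_{m+1}: its permutation part is i_1(s) composed with a cycle
   of length m-n+1, whose sign matches the integer part d + (m-n). *)

Lemma odd_abszD (z w : int) : odd `|(z + w)%R| = odd `|z| (+) odd `|w|.
Proof. lia. Qed.

Lemma perm_le1 m (s : {perm 'I_m}) : m <= 1 -> s = 1%g.
Proof.
move=> le_m1; apply/permP => i; apply: ord_inj; rewrite perm1.
by have := ltn_ord i; have := ltn_ord (s i); lia.
Qed.

Lemma inS_odd m (s : {perm 'I_m}) d : inS s d -> odd `|d| = odd_perm s.
Proof.
rewrite /inS; case: leqP => [le_m1 /eqP -> | _ /eqP //].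
by rewrite (perm_le1 s le_m1) odd_perm1.
Qed.

Lemma natpermE m (f : nat -> nat) :
  (forall i : 'I_m, f i < m) -> injective (fun i : 'I_m => f i) ->
  forall i : 'I_m, val (natperm m f i) = f i.
Proof.
move=> f_lt f_inj i; rewrite /natperm.
set g := fun i : 'I_m => _.
have gE j : val (g j) = f j by rewrite /g val_insubd f_lt.
have g_inj : injectiveb g.
  by apply/injectiveP => j k /(congr1 val); rewrite !gE => /f_inj.
(* select the [true] branch of the dependent [if] defining [natperm] *)
generalize (@erefl bool (injectiveb g)); rewrite {2 3}g_inj => ?.
by rewrite permE gE.
Qed.

Lemma natperm_eq m (f : nat -> nat) (p : {perm 'I_m}) :
  (forall i : 'I_m, f i = p i) -> natperm m f = p.
Proof.
move=> fE; have f_lt (i : 'I_m) : f i < m by rewrite fE.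
have f_inj : injective (fun i : 'I_m => f i).
  by move=> i j /=; rewrite !fE => /val_inj /perm_inj.
by apply/permP => i; apply: val_inj; rewrite natpermE.
Qed.

Lemma sfun_ord k (s : {perm 'I_k}) (i : 'I_k) : sfun s i = s i.
Proof.
by rewrite /sfun insubT //= => lt_ik; congr (val (s _)); apply: val_inj.
Qed.

Lemma sfun_ge k (s : {perm 'I_k}) j : k <= j -> sfun s j = j.
Proof. by move=> le_kj; rewrite /sfun insubF // ltnNge le_kj. Qed.

Lemma sfun_lift k (s : {perm 'I_k}) (i : 'I_k.+1) :
  sfun s i = lift_perm ord_max ord_max s i.
Proof.
case: (unliftP ord_max i) => [j ->|->]; last first.
  by rewrite lift_perm_id sfun_ge.
by rewrite lift_perm_lift /= /bump !(leqNgt k) !ltn_ord /= sfun_ord.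
Qed.

Lemma i1_lift k (s : {perm 'I_k}) : i1 k.+1 s = lift_perm ord_max ord_max s.
Proof. exact: natperm_eq (sfun_lift s). Qed.

Lemma odd_perm_i1 k (s : {perm 'I_k}) : odd_perm (i1 k.+1 s) = odd_perm s.
Proof. by rewrite i1_lift odd_lift_perm addbb. Qed.

Lemma i1_1 k : i1 k.+1 (1%g : {perm 'I_k}) = 1%g.
Proof. by rewrite i1_lift lift_perm1. Qed.

Lemma shiftcycE n m (i : 'I_m.+1) : val (shiftcyc n m i) =
  (if i == n :> nat then m else if n < i <= m then i.-1 else i).
Proof.
apply: natpermE => [j | a b /=].
  by have := ltn_ord j; repeat case: ifP => ?; lia.
move=> E; apply: ord_inj; have := ltn_ord a; have := ltn_ord b; move: E.
by repeat case: ifP => ?; lia.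
Qed.

Lemma shiftcyc_id n : shiftcyc n n = 1%g.
Proof.
apply/permP => i; apply: ord_inj; rewrite shiftcycE perm1; have := ltn_ord i.
by repeat case: ifP => ?; lia.
Qed.

Lemma shiftcycS n m : n <= m ->
  shiftcyc n m.+1 = (i1 m.+2 (shiftcyc n m) * tperm (inord m) (inord m.+1))%g.
Proof.
move=> le_nm; apply/permP => i; apply: ord_inj; rewrite permM shiftcycE.
set x := i1 m.+2 (shiftcyc n m) i.
have xE : nat_of_ord x = if i < m.+1 then
    (if i == n :> nat then m else if n < i <= m then i.-1 else i) else i.
  rewrite /x i1_lift -sfun_lift; case: ltnP => [lt_im | le_mi].
    by rewrite (sfun_ord _ (Ordinal lt_im)) shiftcycE.
  by rewrite sfun_ge.
have lt_i := ltn_ord i.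
case: tpermP => [/(congr1 val) | /(congr1 val) | /eqP ne_xm /eqP ne_xm1].
- by rewrite /= !inordK // xE; repeat case: ifP => ?; lia.
- by rewrite /= !inordK // xE; repeat case: ifP => ?; lia.
- move: ne_xm ne_xm1; rewrite -!(inj_eq val_inj) /= !inordK // xE.
  by repeat case: ifP => ?; lia.
Qed.

Lemma odd_perm_shiftcyc n m : n <= m -> odd_perm (shiftcyc n m) = odd (m - n).
Proof.
elim: m => [|m IH].
  by rewrite leqn0 => /eqP ->; rewrite shiftcyc_id odd_perm1.
rewrite leq_eqVlt => /predU1P [-> | lt_nm].
  by rewrite shiftcyc_id odd_perm1 subnn.
rewrite shiftcycS // odd_permM odd_perm_i1 IH // odd_tperm subSn //.
have -> : inord m != inord m.+1 :> 'I_m.+2.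
  by rewrite -(inj_eq val_inj) /= !inordK // neq_ltn ltnSn.
by rewrite addbT.
Qed.

Lemma inS_Sigma n m (s : {perm 'I_m}) e : n <= m -> inS s e ->
  inS (shiftcyc n m * i1 m.+1 s)%g (e + (m - n)%N%:Z)%R.
Proof.
case: m s => [|m] s le_nm s_in.
  by move: le_nm s_in; rewrite leqn0 /inS /= => /eqP -> /eqP ->.
rewrite /inS /= odd_abszD (inS_odd s_in) odd_permM odd_perm_shiftcyc //.
by rewrite odd_perm_i1 addbC.
Qed.

Definition Mact_id (M : FIdata) : Prop :=
  forall n (x : Mobj M n), Mact M n n 1%g 0%R x = x.

Lemma Sigma_id M : Mact_id M -> Mact_id (Sigma M).
Proof. by move=> idM n x /=; rewrite shiftcyc_id mul1g i1_1 subnn addr0 idM. Qed.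

Lemma genDegLe_Sigma M d : Mact_id M -> genDegLe (Sigma M) d -> genDegLe M d.+1.
Proof.
move=> idM genS [|m] x; first by rewrite -(idM 0 x); apply: span_gen.
elim: (genS m x) => [n s e y le_nd le_nm s_in | | x1 x2 _ span1 _ span2].
- exact: span_gen (inS_Sigma le_nm s_in).
- exact: span_zero.
- exact: span_sub.
Qed.

Lemma genDegLe_iter_Sigma N M d :
  Mact_id M -> genDegLe (iter N Sigma M) d -> genDegLe M (d + N).
Proof.
elim: N M => [|N IH] M idM; first by rewrite addn0.
by rewrite iterSr addnS => /(IH _ (Sigma_id idM)); apply: genDegLe_Sigma.
Qed.

Theorem mainTheorem13 (M : FIdata) (N d : nat) :
  isFIhatMod M -> genDegLe (iter N Sigma M) d -> genDegLe M (d + N).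
Proof. by case=> _ [_ [idM _]]; apply: genDegLe_iter_Sigma. Qed.
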